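(* For all integers $m\ge1$, $n>2m$ and all $\sigma_1^2,\dots,\sigma_n^2>0$, letting $L\subset G^{r}$ with $|L|=2m$ consist of $2m$ arms of $G^{r}$ with the largest variances, we have $\frac{\sum_{i\in L}\sigma_i^2}{\sum_{j\in G^{r}}\sigma_j^2}\ge\frac13$ and \[ \Big(1-\frac{\sum_{i\in L}\sigma_i^2}{\sum_{j\in G^{r}}\sigma_j^2}\Big)\ln(m)\le 4\,\mathrm{Ent}(\sigma^2_L). \]
   Context: For a positive vector $a$, $\mathrm{Ent}(a)=-\sum_i\hat a_i\ln\hat a_i$ with $\hat a_i=a_i/\sum_ja_j$; $\sigma^2_S=(\sigma_i^2)_{i\in S}$. Let $\underline\sigma^2=\min_i\sigma_i^2$, $G_j=\{i\in[n]:2^{j-1}\le\sigma_i^2/\underline\sigma^2<2^j\}$ for $j=1,\dots,k$ covering $[n]$. $G'_j=G_j$ if $|G_j|\le2m$, otherwise $G'_j\subset G_j$ with $|G'_j|=2m$; $G^{r}=\bigcup_jG'_j$, the choices made to maximize $\mathrm{Ent}(\sigma^2_{G^{r}})$. *)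

From HB Require Import structures.
From mathcomp Require Import all_boot all_order all_algebra.
From mathcomp Require Import all_classical all_reals all_analysis.
Set Implicit Arguments. Unset Strict Implicit. Unset Printing Implicit Defensive.
Import Order.TTheory GRing.Theory Num.Theory.
Local Open Scope ring_scope.

Section Defs.
Variable R : realType.

Definition ent (n : nat) (a : 'I_n -> R) (S : {set 'I_n}) : R :=
  let tot := \sum_(j in S) a j in
  - \sum_(i in S) (a i / tot) * ln (a i / tot).

Definition minvar (n : nat) (a : 'I_n -> R) : R :=
  match n return ('I_n -> R) -> R with
  | 0 => fun _ => 0
  | n'.+1 => fun a => \big[Order.min/a ord0]_(i < n'.+1) a i
  end a.

(* G_j = { i : 2^(j-1) <= a_i / min a < 2^j }, meaningful for j >= 1 *)
Definition group (n : nat) (a : 'I_n -> R) (j : nat) : {set 'I_n} :=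
  [set i | (2 ^+ j.-1 <= a i / minvar a) && (a i / minvar a < 2 ^+ j)].

(* G^r = union of G'_j where G'_j = G_j if |G_j| <= 2m, otherwise
   G'_j is a subset of G_j of size 2m (G'_j = G^r :&: G_j). *)
Definition reduced (m n : nat) (a : 'I_n -> R) (Gr : {set 'I_n}) : Prop :=
  forall j : nat, (0 < j)%N ->
    if (#|group a j| <= 2 * m)%N then Gr :&: group a j = group a j
    else #|Gr :&: group a j| = (2 * m)%N.

Definition reduced_max (m n : nat) (a : 'I_n -> R) (Gr : {set 'I_n}) : Prop :=
  reduced m a Gr /\ forall Gr', reduced m a Gr' -> ent a Gr' <= ent a Gr.

Definition top_subset (k n : nat) (a : 'I_n -> R) (G L : {set 'I_n}) : Prop :=
  [/\ L \subset G, #|L| = k &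
      forall i j, i \in L -> j \in G :\: L -> a j <= a i].

End Defs.

From HB Require Import structures.
From mathcomp Require Import all_boot all_order all_algebra.
From mathcomp Require Import all_classical all_reals all_analysis.
From mathcomp Require Import ring lra zify.
Set Implicit Arguments. Unset Strict Implicit. Unset Printing Implicit Defensive.
Import Order.TTheory GRing.Theory Num.Theory.
Local Open Scope ring_scope.

(* Let v be the smallest variance in L and X = 2^(k+1) min_i sigma_i^2 the dyadic
   level just above it, so v < X <= 2 v.  An arm of G^r outside L has variance at
   most v, so it lies either in the group G_(k+1) of v, which holds at most 2m arms
   of G^r, or in a lower group; since every group holds at most 2m arms of G^r, the
   lower groups contribute at most 2m X, a geometric series.  Against the bound
   2m v <= sum_L this gives sum_(G^r \ L) <= 2 sum_L, i.e. rho >= 1/3, and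
   sum_(G^r \ L) <= 6 m v, i.e. 1 - rho <= 6 m q with q = v / sum_L <= 1/(2m).
   Every share of L is at least q, and concavity of p ln(1/p) on [q, 1] gives
   Ent(sigma^2_L) >= (2m - 1) q ln(1/q) >= (2m - 1) q ln m. *)

Section EntropyBound.
Variable R : realType.

Lemma chord_le_xlnVx (p q : R) : 0 < q -> q <= p -> p <= 1 -> q < 1 ->
  (1 - p) / (1 - q) * (q * ln q^-1) <= p * ln p^-1.
Proof.
move=> q_gt0 qp p_le1 q_lt1.
have p_gt0 : 0 < p by apply: lt_le_trans qp.
have q1_neq0 : 1 - q != 0 by rewrite subr_eq0 eq_sym lt_eqF.
have [pn qn] : p != 0 /\ q != 0 by rewrite !gt_eqF.
pose w : R := (1 - p) * q / ((1 - q) * p).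
have w_ge0 : 0 <= w by rewrite divr_ge0 ?mulr_ge0 ?subr_ge0 // ltW.
have w_le1 : w <= 1.
  by rewrite ler_pdivrMr ?mulr_gt0 ?subr_gt0 // mul1r; nra.
(* [p^-1] is the convex combination of [q^-1] and [1] with weight [w] *)
have qV_gt0 : 0 < q^-1 by rewrite invr_gt0.
have := concave_ln (Itv01 w_ge0 w_le1) qV_gt0 ltr01.
rewrite !convRE /= ln1 mulr0 addr0 mulr1.
have -> : w * q^-1 + (1 - w) = p^-1 by rewrite /w; field; rewrite ?pn ?qn ?q1_neq0.
have -> : (1 - p) / (1 - q) * (q * ln q^-1) = p * (w * ln q^-1).
  by rewrite /w; field; rewrite ?pn ?qn ?q1_neq0.
by move=> H; rewrite ler_wpM2l // ltW.
Qed.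

Lemma ent_ge n (a : 'I_n -> R) (S : {set 'I_n}) (v : R) :
  0 < v -> (forall i, i \in S -> v <= a i) -> (2 <= #|S|)%N ->
  (#|S|%:R - 1) * (v / (\sum_(j in S) a j) * ln ((\sum_(j in S) a j) / v))
    <= ent a S.
Proof.
move=> v_gt0 v_le S2; set A := \sum_(j in S) _.
rewrite -[A / v]invf_div; set q := v / A.
have S2R : 2 <= #|S|%:R :> R by rewrite (ler_nat R 2).
have Av : #|S|%:R * v <= A by rewrite mulr_natl -sumr_const ler_sum.
have A_gt0 : 0 < A by apply: lt_le_trans Av; rewrite mulr_gt0 // (lt_le_trans _ S2R).
have q_gt0 : 0 < q by rewrite divr_gt0.
have q_lt1 : q < 1 by rewrite ltr_pdivrMr // mul1r (lt_le_trans _ Av) //; nra.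
have share_le1 i : i \in S -> a i / A <= 1.
  move=> iS; rewrite ler_pdivrMr // mul1r /A (bigD1 i) //= lerDl.
  by rewrite sumr_ge0 // => j /andP[jS _]; rewrite (le_trans (ltW v_gt0)) ?v_le.
have share_ge i : i \in S -> q <= a i / A by move=> iS; rewrite ler_pM2r ?invr_gt0 ?v_le.
have w_ge0 : 0 <= q * ln q^-1.
  by apply: mulr_ge0; [exact: ltW | apply: ln_ge0; rewrite invf_ge1 // ltW].
have sum_co_shares : \sum_(i in S) (1 - a i / A) = #|S|%:R - 1.
  by rewrite sumrB sumr_const -mulr_suml divff ?gt_eqF.
apply: (@le_trans _ _ (\sum_(i in S) (1 - a i / A) / (1 - q) * (q * ln q^-1))).
  rewrite -!big_distrl /= sum_co_shares -mulrA.
  apply: ler_wpM2l; first by rewrite subr_ge0 ler1n ltnW.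
  by rewrite ler_peMl // invf_ge1 ?subr_gt0 // lerBlDr lerDl ltW.
rewrite /ent /= -/A -sumrN; apply: ler_sum => i iS.
have share_gt0 : 0 < a i / A by rewrite divr_gt0 // (lt_le_trans v_gt0) ?v_le.
rewrite -[leRHS]mulrN -lnV ?posrE //.
exact: chord_le_xlnVx (share_ge i iS) (share_le1 i iS) q_lt1.
Qed.

Lemma share_ge_third (A B : R) : 0 < A -> 0 <= B -> B <= 2 * A -> 3^-1 <= A / (A + B).
Proof.
move=> A_gt0 B_ge0 B_le; rewrite ler_pdivlMr; last by rewrite ltr_wpDr.
by rewrite mulrC ler_pdivrMr //; lra.
Qed.

Lemma deficit_ln_le (m : nat) (A B v E : R) : (0 < m)%N -> 0 < v ->
  2 * m%:R * v <= A -> 0 <= B -> B <= 6 * m%:R * v ->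
  (2 * m%:R - 1) * (v / A * ln (A / v)) <= E ->
  (1 - A / (A + B)) * ln m%:R <= 4 * E.
Proof.
move=> m_gt0 v_gt0 A_ge B_ge0 B_le; rewrite -[A / v]invf_div; set q := v / A => E_ge.
set M : R := m%:R in A_ge B_le E_ge *.
have M_ge1 : 1 <= M by rewrite ler1n.
have M_gt0 : 0 < M by apply: lt_le_trans M_ge1.
have A_gt0 : 0 < A by apply: lt_le_trans A_ge; rewrite !mulr_gt0.
have q_gt0 : 0 < q by rewrite divr_gt0.
have qA : q * A = v by rewrite divfK ?gt_eqF.
have M_le_qV : M <= q^-1.
  by rewrite invf_div ler_pdivlMr // (le_trans _ A_ge) //; nra.
have lnM_ge0 : 0 <= ln M by rewrite ln_ge0.
have lnM_le : ln M <= ln q^-1.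
  by rewrite ler_ln ?posrE ?invr_gt0.
pose u := q * ln M; set w := q * ln q^-1 in E_ge.
have u_ge0 : 0 <= u by rewrite mulr_ge0 // ltW.
have u_le_w : u <= w by rewrite ler_wpM2l // ltW.
have -> : 1 - A / (A + B) = B / (A + B) by field; rewrite gt_eqF ?ltr_wpDr.
have deficit_le : B / (A + B) <= 6 * M * q.
  rewrite ler_pdivrMr ?ltr_wpDr // mulrDr -[6 * M * q * A]mulrA qA.
  have : 0 <= 6 * M * q * B by apply: mulr_ge0 => //; nra.
  lra.
have deficit_lnM_le : B / (A + B) * ln M <= 6 * M * u.
  by rewrite /u mulrA ler_wpM2r.
have [m1 | m_ge2] := leqP m 1.
  have -> : M = 1 by rewrite /M (_ : m = 1%N) //; apply/eqP; rewrite eqn_leq m1.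
  have : 0 <= (2 * M - 1) * w by apply: mulr_ge0; [lra | exact: le_trans u_le_w].
  rewrite ln1 mulr0; lra.
have M_ge2 : 2 <= M by rewrite (ler_nat R 2).
(* for [M >= 2], [6 M <= 4 (2 M - 1)] *)
have : 0 <= (M - 2) * u by rewrite mulr_ge0 // subr_ge0.
have : 0 <= (2 * M - 1) * (w - u) by rewrite mulr_ge0 // subr_ge0 //; lra.
nra.
Qed.

End EntropyBound.

Lemma minvar_le (R : realType) n (a : 'I_n -> R) i : minvar a <= a i.
Proof. by case: n a i => [|n] a [i lt_i] //; exact: bigmin_le. Qed.

Lemma minvar_gt0 (R : realType) n (a : 'I_n -> R) :
  (0 < n)%N -> (forall i, 0 < a i) -> 0 < minvar a.
Proof. by case: n a => // n a _ a_gt0; apply: lt_bigmin. Qed.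

Lemma dyadic_bracket (R : realType) (r : R) :
  1 <= r -> exists k : nat, 2 ^+ k <= r < 2 ^+ k.+1.
Proof.
move=> r_ge1.
have [N r_lt] : exists N : nat, r < 2 ^+ N.
  exists (Num.bound r); apply: (lt_le_trans (archi_boundP (le_trans ler01 r_ge1))).
  by rewrite -natrX ler_nat ltnW // ltn_expl.
elim: N r_lt => [|N IH] r_lt; first by move: (lt_le_trans r_lt r_ge1); rewrite ltxx.
by case: (ltP r (2 ^+ N)) => [/IH | r_ge]; last exists N; rewrite ?r_ge.
Qed.

Lemma reduced_card_le (R : realType) m n (a : 'I_n -> R) (Gr : {set 'I_n}) :
  reduced m a Gr -> forall k, (#|Gr :&: group a k.+1| <= 2 * m)%N.
Proof. by move=> Gr_red k; have := Gr_red k.+1 isT; case: ifP => [? -> | _ ->]. Qed.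

Section DyadicGroups.
Variables (R : realType) (n : nat) (a : 'I_n -> R).
Hypotheses (n_gt0 : (0 < n)%N) (a_gt0 : forall i, 0 < a i).

Local Notation mu := (minvar a).

Let mu_gt0 : 0 < mu. Proof. exact: minvar_gt0. Qed.

Lemma mem_group k i : (i \in group a k.+1) = (2 ^+ k <= a i / mu < 2 ^+ k.+1).
Proof. by rewrite inE. Qed.

Lemma group_cover i : exists k, i \in group a k.+1.
Proof.
have [k k_i] : exists k : nat, 2 ^+ k <= a i / mu < 2 ^+ k.+1.
  by apply: dyadic_bracket; rewrite ler_pdivlMr // mul1r minvar_le.
by exists k; rewrite mem_group.
Qed.

Lemma sum_below_dyadic (S : {set 'I_n}) (c k : nat) :
  (forall j, (#|S :&: group a j.+1| <= c)%N) ->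
  (forall i, i \in S -> a i / mu < 2 ^+ k) ->
  \sum_(i in S) a i <= c%:R * (mu * 2 ^+ k.+1).
Proof.
elim: k S => [|k IH] S S_cap S_lt.
  rewrite big1 => [|i /S_lt]; first by rewrite !mulr_ge0 // ltW.
  by rewrite expr0 ltr_pdivrMr // mul1r ltNge minvar_le.
have -> : c%:R * (mu * 2 ^+ k.+2) = c%:R * (mu * 2 ^+ k.+1) *+ 2.
  by rewrite [2 ^+ k.+2]exprS; ring.
rewrite (big_setID (group a k.+1)) /= mulr2n; apply: lerD.
  apply: (@le_trans _ _ (#|S :&: group a k.+1|%:R * (mu * 2 ^+ k.+1))).
    rewrite mulr_natl -sumr_const; apply: ler_sum => i /setIP[_].
    by rewrite mem_group => /andP[_]; rewrite ltr_pdivrMr // mulrC => /ltW.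
  by apply: ler_wpM2r; [rewrite mulr_ge0 ?exprn_ge0 // ltW | rewrite ler_nat].
apply: IH => [j | i /setDP[iS]].
  by apply: (leq_trans _ (S_cap j)); rewrite subset_leq_card // finset.setSI // subsetDl.
by rewrite inE S_lt // andbT -ltNge.
Qed.

Section TopOfReduced.
Variables (m : nat) (Gr L : {set 'I_n}) (i0 : 'I_n) (k : nat).
Hypotheses (Gr_cap : forall j, (#|Gr :&: group a j.+1| <= 2 * m)%N)
  (L_sub : L \subset Gr) (card_L : #|L| = (2 * m)%N)
  (L_top : forall i j, i \in L -> j \in Gr :\: L -> a j <= a i)
  (i0_L : i0 \in L) (i0_min : forall i, i \in L -> a i0 <= a i)
  (i0_k : i0 \in group a k.+1).

Local Notation v := (a i0).
Local Notation X := (mu * 2 ^+ k.+1).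
Local Notation T := (Gr :&: group a k.+1).

Let v_lt_X : v < X.
Proof. by move: i0_k; rewrite mem_group => /andP[_]; rewrite ltr_pdivrMr // mulrC. Qed.

Let X_le_2v : X <= 2 * v.
Proof.
move: i0_k; rewrite mem_group ler_pdivlMr // => /andP[k_le _].
by rewrite exprS mulrCA ler_wpM2l // mulrC.
Qed.

Let band_ge i : v <= a i -> 2 ^+ k <= a i / mu.
Proof.
move: i0_k; rewrite mem_group => /andP[k_le _] v_le.
by rewrite (le_trans k_le) // ler_pM2r ?invr_gt0.
Qed.

Lemma card_rest_le : (#|T :\: L| <= #|L :\: T|)%N.
Proof.
have := cardsID L T; have := cardsID T L; have := Gr_cap k.
rewrite [T :&: L]finset.setIC card_L; lia.
Qed.

Lemma sum_top_ge_card : (2 * m)%:R * v <= \sum_(i in L) a i.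
Proof. by rewrite -card_L mulr_natl -sumr_const; apply: ler_sum => i /i0_min. Qed.

Lemma sum_top_ge : #|L :&: T|%:R * v + #|L :\: T|%:R * X <= \sum_(i in L) a i.
Proof.
rewrite (big_setID T) /=; apply: lerD; rewrite mulr_natl -sumr_const.
  by apply: ler_sum => i /setIP[/i0_min].
apply: ler_sum => i /setDP[iL]; have iGr := fintype.subsetP L_sub i iL.
rewrite finset.in_setI iGr mem_group band_ge ?i0_min //= -leNgt.
by rewrite ler_pdivlMr // [_ * mu]mulrC.
Qed.

Lemma sum_rest_le : \sum_(i in Gr :\: L) a i <= #|T :\: L|%:R * v + (2 * m)%:R * X.
Proof.
rewrite (big_setID T) /=; apply: lerD.
  have -> : (Gr :\: L) :&: T = T :\: L.
    by apply/setP => i; rewrite !inE; case: (i \in L); case: (i \in Gr).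
  rewrite mulr_natl -sumr_const; apply: ler_sum => i /setDP[/setIP[iGr _] iL].
  by apply: L_top i0_L _; rewrite finset.in_setD iL.
apply: sum_below_dyadic => [j | i /setDP[/setDP[iGr iL]]].
  apply: (leq_trans _ (Gr_cap j)); rewrite subset_leq_card // finset.setSI //.
  exact: fintype.subset_trans (subsetDl _ _) (subsetDl _ _).
have ai_lt_X : a i < X by apply: le_lt_trans v_lt_X; apply: L_top i0_L _; rewrite finset.in_setD iL.
have : a i / mu < 2 ^+ k.+1 by rewrite ltr_pdivrMr // mulrC.
by rewrite finset.in_setI iGr mem_group /= => ->; rewrite andbT -ltNge.
Qed.

Lemma sum_rest_le_twice_top : \sum_(i in Gr :\: L) a i <= 2 * \sum_(i in L) a i.
Proof.
have := sum_top_ge; have := sum_rest_le.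
have c12 : (2 * m)%:R = #|L :&: T|%:R + #|L :\: T|%:R :> R.
  by rewrite -natrD cardsID card_L.
have := card_rest_le; rewrite -(ler_nat R) c12.
set c1 : R := #|L :&: T|%:R; set c2 : R := #|L :\: T|%:R; set b1 : R := #|T :\: L|%:R.
move=> b1_le.
have : b1 * v <= c2 * X.
  by apply: ler_pM => //; [exact: ltW (a_gt0 i0) | exact: ltW v_lt_X].
have : c1 * X <= c1 * (2 * v) by rewrite ler_wpM2l ?ler0n.
lra.
Qed.

Lemma sum_rest_le_min : \sum_(i in Gr :\: L) a i <= 6 * m%:R * v.
Proof.
apply: le_trans sum_rest_le _.
have b1_le : #|T :\: L|%:R <= (2 * m)%:R :> R.
  by rewrite ler_nat (leq_trans _ (Gr_cap k)) // subset_leq_card // subsetDl.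
have : #|T :\: L|%:R * v <= (2 * m)%:R * v by rewrite ler_wpM2r // ltW.
have : (2 * m)%:R * X <= (2 * m)%:R * (2 * v) by rewrite ler_wpM2l.
rewrite natrM; lra.
Qed.

End TopOfReduced.

End DyadicGroups.

Theorem lemma12 (R : realType) (m n : nat) (sigma2 : 'I_n -> R)
    (Gr L : {set 'I_n}) :
  (1 <= m)%N -> (2 * m < n)%N -> (forall i, 0 < sigma2 i) ->
  reduced_max m sigma2 Gr -> top_subset (2 * m) sigma2 Gr L ->
  let rho := (\sum_(i in L) sigma2 i) / (\sum_(j in Gr) sigma2 j) in
  3^-1 <= rho /\ (1 - rho) * ln (m%:R : R) <= 4 * ent sigma2 L.
Proof.
move=> m_gt0 n_gt2m a_gt0 [Gr_red _] [L_sub card_L L_top] rho.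
have n_gt0 : (0 < n)%N by apply: leq_ltn_trans n_gt2m.
have Gr_cap := reduced_card_le Gr_red.
have [i0 i0_L i0_min] : exists2 i0, i0 \in L & forall i, i \in L -> sigma2 i0 <= sigma2 i.
  have [j jL] : exists j, j \in L by apply/card_gt0P; rewrite card_L muln_gt0.
  by case: (@arg_minP _ _ _ j (mem L) sigma2 jL) => i0; exists i0.
have [k i0_k] := group_cover n_gt0 a_gt0 i0.
have -> : rho = (\sum_(i in L) sigma2 i)
            / (\sum_(i in L) sigma2 i + \sum_(i in Gr :\: L) sigma2 i).
  by rewrite /rho [\sum_(j in Gr) _](big_setID L) /= (finset.setIidPr L_sub).
have v_gt0 := a_gt0 i0.
have sum_L_ge := sum_top_ge_card card_L i0_min.
have sum_L_gt0 : 0 < \sum_(i in L) sigma2 i.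
  by apply: lt_le_trans sum_L_ge; rewrite mulr_gt0 // ltr0n muln_gt0.
have sum_rest_ge0 : 0 <= \sum_(i in Gr :\: L) sigma2 i.
  by rewrite sumr_ge0 // => i _; apply: ltW.
split.
  apply: share_ge_third => //.
  exact (sum_rest_le_twice_top n_gt0 a_gt0 Gr_cap L_sub card_L L_top i0_L i0_min i0_k).
refine (deficit_ln_le m_gt0 v_gt0 _ sum_rest_ge0 _ _).
- by rewrite -natrM.
- exact (sum_rest_le_min n_gt0 a_gt0 Gr_cap L_top i0_L i0_k).
have L_ge2 : (2 <= #|L|)%N by rewrite card_L; lia.
by have := ent_ge v_gt0 i0_min L_ge2; rewrite card_L natrM.
Qed.
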